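(* Let $\mathcal{M}=\{\mathcal{M}_o\}$ be a noisy $n$-qudit instrument that is applied every time a computational-basis measurement is performed. Assume all Weyl gates are implemented ideally. Run the following routine with initial state $\rho$ and sequence length $m\ge 1$: - Set $\alpha_0=0$. - For $i=1,\dots,m$: choose $\alpha_i,\beta_i\in\mathbb{Z}_d^n$ uniformly and independently at random; apply the gate $Z^{\beta_i}X^{\alpha_{i-1}-\alpha_i}$; measure with $\mathcal{M}$, obtaining outcome $o_i$; set $k_i=\alpha_i+o_i$. - Return $\vec k=(k_1,\dots,k_m)$. Then for every $\vec k\in(\mathbb{Z}_d^n)^m$, the probability that the routine returns $\vec k$ is $$\Pr(\vec k)=\operatorname{tr}\big(\hat{\mathcal{M}}_{k_m}\circ\cdots\circ\hat{\mathcal{M}}_{k_1}(\rho)\big),$$ where $\hat{\mathcal{M}}$ is the randomly compiled version of $\mathcal{M}$.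
   Context: Let $d,n$ be positive integers, with arithmetic on $\mathbb{Z}_d^n$ modulo $d$. Let $X^x=\sum_j|j+x\rangle\langle j|$ and $Z^z=\sum_j e^{2\pi i z\cdot j/d}|j\rangle\langle j|$. For an operator $A$, $\mathcal{A}(\rho)=A\rho A^\dagger$. An instrument $\{\mathcal{M}_o\}_{o\in\mathbb{Z}_d^n}$ is a family of completely positive trace-non-increasing maps summing to a trace-preserving map. Measuring a state $\sigma$ with it yields outcome $o$ with probability $\operatorname{tr}\mathcal{M}_o(\sigma)$ and post-measurement state $\mathcal{M}_o(\sigma)/\operatorname{tr}\mathcal{M}_o(\sigma)$. The randomly compiled version of $\mathcal{M}$ is $$\hat{\mathcal{M}}_k=d^{-3n}\sum_{a,b,x}\mathcal{X}^{x}\circ\mathcal{Z}^{a}\circ\mathcal{M}_{k-x}\circ\mathcal{Z}^{b}\circ\mathcal{X}^{-x}.$$ *)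

From HB Require Import structures.
From mathcomp Require Import all_boot all_order all_algebra.
From mathcomp Require Import algC.
Set Implicit Arguments.
Unset Strict Implicit.
Unset Printing Implicit Defensive.
Import Order.TTheory GRing.Theory Num.Theory.
Local Open Scope ring_scope.

(* Z_d for d > 0 : 'I_(d.-1).+1, whose zmodType arithmetic is mod (d.-1).+1 = d. *)
Notation Zd d := 'I_(d.-1).+1.
Notation Zdn d n := 'rV[Zd d]_n.
Notation dimH d n := #|{: Zdn d n}|.
(* Operators on the Hilbert space; basis index j is enum_rank j. *)
Notation Op d n := 'M[algC]_(dimH d n).

(* omega = e^{2 pi i/d}: d.-root (-1) is the d-th root of -1 of minimal
   non-negative argument, i.e. e^{i pi/d} (and -1 when d = 1). *)
Definition omega (d : nat) : algC := (d.-root (-1)) ^+ 2.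

(* dot product z.j (as a natural number; only its class mod d matters) *)
Definition dotZ d n (z j : Zdn d n) : nat := (\sum_(i < n) (z ord0 i : nat) * (j ord0 i : nat))%N.

Definition Xop d n (x : Zdn d n) : Op d n :=
  \matrix_(r, c) (enum_val r == enum_val c + x)%:R.

Definition Zop d n (z : Zdn d n) : Op d n :=
  \matrix_(r, c) ((r == c)%:R * omega d ^+ dotZ z (enum_val c)).

Definition adj (p q : nat) (A : 'M[algC]_(p, q)) : 'M[algC]_(q, p) :=
  (map_mx Num.conj_op A)^T.

Definition conjop (N : nat) (A : 'M[algC]_N) (rho : 'M[algC]_N) : 'M[algC]_N :=
  A *m rho *m adj A.

Definition psd (N : nat) (A : 'M[algC]_N) : Prop :=
  forall v : 'cV[algC]_N, 0 <= (adj v *m A *m v) 0 0.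

Definition density (N : nat) (rho : 'M[algC]_N) : Prop :=
  psd rho /\ \tr rho = 1.

Definition block_psd (N k : nat) (B : 'I_k -> 'I_k -> 'M[algC]_N) : Prop :=
  forall v : 'I_k -> 'cV[algC]_N,
    0 <= \sum_(a < k) \sum_(b < k) (adj (v a) *m B a b *m v b) 0 0.

Definition linear_map (N : nat) (Phi : 'M[algC]_N -> 'M[algC]_N) : Prop :=
  forall (c : algC) (A B : 'M[algC]_N), Phi (c *: A + B) = c *: Phi A + Phi B.

(* completely positive: linear and id_k (x) Phi maps psd to psd for all k
   (id_k (x) Phi acts blockwise on k x k block matrices) *)
Definition completely_positive (N : nat) (Phi : 'M[algC]_N -> 'M[algC]_N) : Prop :=
  linear_map Phi /\
  forall (k : nat) (B : 'I_k -> 'I_k -> 'M[algC]_N),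
    block_psd B -> block_psd (fun a b => Phi (B a b)).

Definition trace_nonincreasing (N : nat) (Phi : 'M[algC]_N -> 'M[algC]_N) : Prop :=
  forall rho, psd rho -> \tr (Phi rho) <= \tr rho.

Definition instrument (T : finType) (N : nat) (M : T -> 'M[algC]_N -> 'M[algC]_N) : Prop :=
  (forall o, completely_positive (M o) /\ trace_nonincreasing (M o)) /\
  (forall rho, \tr (\sum_(o : T) M o rho) = \tr rho).

Definition hatM d n (M : Zdn d n -> Op d n -> Op d n) (k : Zdn d n) (rho : Op d n)
  : Op d n :=
  ((d ^ (3 * n))%:R)^-1 *:
  \sum_(a : Zdn d n) \sum_(b : Zdn d n) \sum_(x : Zdn d n)
     conjop (Xop x) (conjop (Zop a) (M (k - x) (conjop (Zop b) (conjop (Xop (- x)) rho)))).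

(* Probability that the routine, started in state sigma with previous
   alpha = aprev, returns the sequence ks. One step: alpha, beta uniform
   on Z_d^n, apply Z^beta X^(aprev - alpha), measure with M: outcome o with
   probability p_o = tr M_o(sigma'), post-measurement state M_o(sigma')/p_o,
   record k = alpha + o. *)
Fixpoint routine_prob d n (M : Zdn d n -> Op d n -> Op d n)
    (sigma : Op d n) (aprev : Zdn d n) (ks : seq (Zdn d n)) : algC :=
  match ks with
  | [::] => 1
  | k :: ks' =>
    \sum_(a : Zdn d n) \sum_(b : Zdn d n)
      ((d ^ (2 * n))%:R)^-1 *
      \sum_(o : Zdn d n | a + o == k)
        let sigma1 := conjop (Zop b *m Xop (aprev - a)) sigma in
        let p := \tr (M o sigma1) in
        p * routine_prob M (p^-1 *: M o sigma1) a ks'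
  end.

From mathcomp Require Import all_boot all_order all_algebra.
From mathcomp Require Import algC.
From mathcomp Require Import ring.

Set Implicit Arguments.
Unset Strict Implicit.
Unset Printing Implicit Defensive.
Import Order.TTheory GRing.Theory Num.Theory.
Local Open Scope ring_scope.

(* Compare the routine with its unnormalised version, in which
   each step passes on M_o(sigma') instead of M_o(sigma')/p_o: a positive
   semidefinite matrix of trace 0 is 0, so both agree even when p_o = 0.
   By induction on the sequence, the unnormalised routine started in s with
   previous alpha = x yields tr(hatM_ks(X^x s X^-x)).  After substituting
   o = k - alpha, a step differs from hatM only by the conjugation by Z^a that
   hatM applies after M; followed by any X^y, this conjugation is absorbed by
   the next hatM or by the final trace, since Z^b X^u Z^a = omega^(-a.u)
   Z^(b+a) X^u and b |-> b + a permutes the average over b.  The then idle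
   average over a turns the factor d^-3n into d^-2n. *)

Lemma adjM p q r (A : 'M[algC]_(p, q)) (B : 'M[algC]_(q, r)) :
  adj (A *m B) = adj B *m adj A.
Proof. by rewrite /adj map_mxM trmx_mul. Qed.

Lemma adjK p q (A : 'M[algC]_(p, q)) : adj (adj A) = A.
Proof. by apply/matrixP => i j; rewrite !mxE conjCK. Qed.

Lemma adjD p q (A B : 'M[algC]_(p, q)) : adj (A + B) = adj A + adj B.
Proof. by apply/matrixP => i j; rewrite !mxE rmorphD. Qed.

Lemma adjZ p q c (A : 'M[algC]_(p, q)) : adj (c *: A) = c^* *: adj A.
Proof. by apply/matrixP => i j; rewrite !mxE rmorphM. Qed.

Lemma adj1 N : adj (1%:M : 'M[algC]_N) = 1%:M.
Proof. by rewrite /adj map_mx1 trmx1. Qed.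

Section Conjugation.
Variable N : nat.
Implicit Types A B X Y : 'M[algC]_N.

Lemma conjopZ A c X : conjop A (c *: X) = c *: conjop A X.
Proof. by rewrite /conjop -scalemxAr -scalemxAl. Qed.

Lemma conjopM A B X : conjop A (conjop B X) = conjop (A *m B) X.
Proof. by rewrite /conjop adjM !mulmxA. Qed.

Lemma conjop1 X : conjop 1%:M X = X.
Proof. by rewrite /conjop adj1 mulmx1 mul1mx. Qed.

Lemma conjopZl c A X : c * c^* = 1 -> conjop (c *: A) X = conjop A X.
Proof.
by move=> hc; rewrite /conjop adjZ -!scalemxAl -scalemxAr scalerA hc scale1r.
Qed.

Lemma mxtrace_conjop A X : adj A *m A = 1%:M -> \tr (conjop A X) = \tr X.
Proof. by move=> h; rewrite /conjop mxtrace_mulC mulmxA h mul1mx. Qed.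

Lemma linear_map_conjop A : linear_map (conjop A).
Proof. by move=> c X Y; rewrite -conjopZ /conjop mulmxDr mulmxDl. Qed.

End Conjugation.

Section LinearMaps.
Variables (N : nat) (F : 'M[algC]_N -> 'M[algC]_N).
Hypothesis linF : linear_map F.

Lemma linear_map0 : F 0 = 0.
Proof.
have := linF 1 0 0; rewrite !scale1r addr0 => e.
by apply: (addrI (F 0)); rewrite addr0 -e.
Qed.

Lemma linear_mapD X Y : F (X + Y) = F X + F Y.
Proof. by rewrite -{1}[X]scale1r linF scale1r. Qed.

Lemma linear_mapZ c X : F (c *: X) = c *: F X.
Proof. by rewrite -[c *: X]addr0 linF linear_map0 addr0. Qed.

Lemma linear_map_sum (I : finType) (G : I -> 'M[algC]_N) :
  F (\sum_i G i) = \sum_i F (G i).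
Proof. exact: (big_morph F linear_mapD linear_map0). Qed.

End LinearMaps.

Lemma linear_map_sumfun N (I : finType) (F : I -> 'M[algC]_N -> 'M[algC]_N) :
  (forall i, linear_map (F i)) -> linear_map (fun X => \sum_i F i X).
Proof.
move=> linF c X Y; rewrite scaler_sumr -big_split.
by apply: eq_bigr => i _; apply: linF.
Qed.

Lemma linear_map_scale N s (F : 'M[algC]_N -> 'M[algC]_N) :
  linear_map F -> linear_map (fun X => s *: F X).
Proof. by move=> linF c X Y; rewrite linF scalerDr !scalerA mulrC. Qed.

Section PositiveSemidefinite.
Variable N : nat.
Implicit Types X : 'M[algC]_N.

Lemma psd_conjop A X : psd X -> psd (conjop A X).
Proof. by move=> h v; have := h (adj A *m v); rewrite /conjop adjM adjK !mulmxA. Qed.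

Lemma psd_scale c X : 0 <= c -> psd X -> psd (c *: X).
Proof. by move=> hc h v; rewrite -scalemxAr -scalemxAl mxE mulr_ge0. Qed.

Lemma quad_form_delta X p q :
  (adj (delta_mx p 0 : 'cV_N) *m X *m (delta_mx q 0 : 'cV_N)) 0 0 = X p q.
Proof.
have -> : adj (delta_mx p 0 : 'cV[algC]_N) = (delta_mx 0 p : 'rV[algC]_N).
  by apply/matrixP => a b; rewrite /adj !mxE conjC_nat andbC.
by rewrite -rowE -colE !mxE.
Qed.

Lemma quad_formD X (u w : 'cV[algC]_N) c :
  (adj (u + c *: w) *m X *m (u + c *: w)) 0 0 =
  (adj u *m X *m u) 0 0 + c * (adj u *m X *m w) 0 0 +
  c^* * (adj w *m X *m u) 0 0 + c^* * c * (adj w *m X *m w) 0 0.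
Proof. by rewrite adjD adjZ !(mulmxDl, mulmxDr) -!scalemxAl -!scalemxAr !mxE; ring. Qed.

Lemma psd_diag_ge0 X i : psd X -> 0 <= X i i.
Proof. by move=> h; rewrite -quad_form_delta. Qed.

Lemma psd_tr_ge0 X : psd X -> 0 <= \tr X.
Proof. by move=> h; apply: sumr_ge0 => i _; apply: psd_diag_ge0. Qed.

Lemma psd_diag0_eq0 X : psd X -> (forall i, X i i = 0) -> X = 0.
Proof.
move=> hX diag0; apply/matrixP => i j; rewrite mxE.
have [<-|_] := eqVneq i j; first exact: diag0.
(* Testing on e_i + c e_j: the form below is >= 0 for all c, and odd in c. *)
have form_ge0 c : 0 <= c * X i j + c^* * X j i.
  have := hX (delta_mx i 0 + c *: delta_mx j 0).
  by rewrite quad_formD !quad_form_delta !diag0 mulr0 addr0 add0r.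
have form0 c : c * X i j + c^* * X j i = 0.
  apply/eqP; rewrite eq_le form_ge0 andbT -oppr_ge0.
  by have := form_ge0 (- c); rewrite rmorphN !mulNr opprD.
have := form0 1; rewrite rmorph1 !mul1r => /eqP; rewrite addr_eq0 => /eqP eji.
have := form0 'i; rewrite conjCi eji mulNr mulrN -opprD -mulr2n => /eqP.
by rewrite !oppr_eq0 mulrn_eq0 mulf_eq0 (negbTE (neq0Ci _)) => /eqP ->; rewrite oppr0.
Qed.

Lemma psd_tr0 X : psd X -> \tr X = 0 -> X = 0.
Proof.
move=> hX tr0; apply: psd_diag0_eq0 => // i.
apply: (psumr_eq0P (P := predT) (F := fun i => X i i)) => // j _.
exact: psd_diag_ge0.
Qed.

End PositiveSemidefinite.

Lemma sum_delta (R : pzRingType) (I : finType) (r : I) (f : I -> R) :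
  \sum_t (t == r)%:R * f t = f r.
Proof.
rewrite (bigD1 r) //= eqxx mul1r big1 ?addr0 // => t /negbTE ->.
by rewrite mul0r.
Qed.

Lemma sum_pred_addl (V : finZmodType) (R : nmodType) (F : V -> R) (a k : V) :
  \sum_(o | a + o == k) F o = F (k - a).
Proof. by apply: big_pred1 => o /=; rewrite [RHS]eq_sym subr_eq eq_sym addrC. Qed.

Section Weyl.
Variables d n : nat.
Hypothesis d_gt0 : (0 < d)%N.
Local Notation T := (Zdn d n).
Local Notation w := (omega d).
Local Notation D := (d.-1).+1.
Implicit Types (a b u v z : T) (X : Op d n).

Lemma card_Zdn : #|{: T}| = (d ^ n)%N.
Proof. by rewrite card_mx card_ord mul1n prednK. Qed.

Lemma XopD u v : Xop u *m Xop v = Xop (u + v).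
Proof.
apply/matrixP => r s; rewrite !mxE.
under eq_bigr => t _ do rewrite !mxE mulrC (can2_eq enum_valK enum_rankK).
by rewrite sum_delta enum_rankK -addrA (addrC v).
Qed.

Lemma Xop0 : Xop (0 : T) = 1%:M.
Proof. by apply/matrixP => r s; rewrite !mxE addr0 (inj_eq enum_val_inj). Qed.

Lemma adj_Xop u : adj (Xop u) = Xop (- u).
Proof.
by apply/matrixP => r s; rewrite /adj !mxE conjC_nat [in RHS]eq_sym subr_eq.
Qed.

Lemma Xop_unitary u : adj (Xop u) *m Xop u = 1%:M.
Proof. by rewrite adj_Xop XopD addNr Xop0. Qed.

Lemma conjop_XopD u v X : conjop (Xop u) (conjop (Xop v) X) = conjop (Xop (u + v)) X.
Proof. by rewrite conjopM XopD. Qed.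

Lemma omega_expr_mod i : w ^+ (i %% D) = w ^+ i.
Proof.
apply: expr_mod; rewrite prednK // /omega exprAC rootCK //.
by rewrite expr2 mulN1r opprK.
Qed.

Lemma omegaX_unit k : w ^+ k * (w ^+ k)^* = 1.
Proof.
rewrite rmorphXn -exprMn -normCK /omega normrX norm_rootC normrN1 rootC1 //.
by rewrite !expr1n.
Qed.

Lemma dotZDl a b j : (dotZ (a + b) j = dotZ a j + dotZ b j %[mod D])%N.
Proof.
rewrite /dotZ -big_split /= -modn_summ -[RHS]modn_summ.
by congr (_ %% _)%N; apply: eq_bigr => i _; rewrite !mxE /= modnMml mulnDl.
Qed.

Lemma dotZDr a j k : (dotZ a (j + k) = dotZ a j + dotZ a k %[mod D])%N.
Proof.
rewrite /dotZ -big_split /= -modn_summ -[RHS]modn_summ.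
by congr (_ %% _)%N; apply: eq_bigr => i _; rewrite !mxE /= modnMmr mulnDr.
Qed.

Lemma omega_dotZDl a b j : w ^+ dotZ (a + b) j = w ^+ dotZ a j * w ^+ dotZ b j.
Proof. by rewrite -exprD -omega_expr_mod dotZDl omega_expr_mod. Qed.

Lemma omega_dotZDr a j k : w ^+ dotZ a (j + k) = w ^+ dotZ a j * w ^+ dotZ a k.
Proof. by rewrite -exprD -omega_expr_mod dotZDr omega_expr_mod. Qed.

Lemma mulmx_Zop_l z X r s : (Zop z *m X) r s = w ^+ dotZ z (enum_val r) * X r s.
Proof.
rewrite mxE; under eq_bigr => t _ do rewrite mxE -mulrA eq_sym.
by rewrite (sum_delta r (fun t => w ^+ dotZ z (enum_val t) * X t s)).
Qed.

Lemma mulmx_Zop_r z X r s : (X *m Zop z) r s = X r s * w ^+ dotZ z (enum_val s).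
Proof.
rewrite mxE; under eq_bigr => t _ do rewrite mxE mulrCA.
by rewrite (sum_delta s (fun t => X r t * w ^+ dotZ z (enum_val s))).
Qed.

Lemma Zop_unitary z : adj (Zop z) *m Zop z = 1%:M.
Proof.
apply/matrixP => r s; rewrite mulmx_Zop_r /adj !mxE.
have [->|_] := eqVneq r s; last by rewrite mul0r rmorph0 mul0r.
by rewrite mul1r mulrC omegaX_unit.
Qed.

Lemma Zop_Xop_commute a b u :
  Zop (b + a) *m Xop u = w ^+ dotZ a u *: (Zop b *m Xop u *m Zop a).
Proof.
apply/matrixP => r s; rewrite mulmx_Zop_l [RHS]mxE mulmx_Zop_r mulmx_Zop_l !mxE.
have [->|_] := eqVneq (enum_val r) (enum_val s + u); last by rewrite !mulr0 mul0r mulr0.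
by rewrite omega_dotZDl !omega_dotZDr !mulr1 mulrA [RHS]mulrC.
Qed.

Lemma conjop_Zop_Xop_Zop a b u X :
  conjop (Zop b) (conjop (Xop u) (conjop (Zop a) X)) =
  conjop (Zop (b + a)) (conjop (Xop u) X).
Proof. by rewrite !conjopM Zop_Xop_commute conjopZl ?mulmxA ?omegaX_unit. Qed.

End Weyl.

Section RandomCompiling.
Variables d n : nat.
Hypothesis d_gt0 : (0 < d)%N.
Local Notation T := (Zdn d n).
Variable M : T -> Op d n -> Op d n.
Hypothesis M_instrument : instrument M.
Implicit Types (a b x y : T) (s X : Op d n) (ks : seq T).

Lemma instrument_linear o : linear_map (M o).
Proof. exact: (M_instrument.1 o).1.1. Qed.

Lemma instrument_psd o X : psd X -> psd (M o X).
Proof.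
move=> psdX v.
have psdB : block_psd (fun _ _ : 'I_1 => X) by move=> u; rewrite !big_ord1.
by have := (M_instrument.1 o).1.2 1%N _ psdB (fun _ => v); rewrite !big_ord1.
Qed.

Lemma linear_map_hatM k : linear_map (hatM M k).
Proof.
apply: linear_map_scale; do 3 apply: linear_map_sumfun => ?.
by move=> c X Y; rewrite !linear_map_conjop instrument_linear !linear_map_conjop.
Qed.

Definition compiled_seq ks X := foldl (fun sigma kk => hatM M kk sigma) X ks.

Lemma linear_map_compiled_seq ks : linear_map (compiled_seq ks).
Proof.
elim: ks => [|k ks IH] c X Y //=.
by rewrite /compiled_seq /= linear_map_hatM -!/(compiled_seq _ _) IH.
Qed.

Definition compiled_tr ks X := \tr (compiled_seq ks X).

Lemma compiled_tr_sum ks (I : finType) (F : I -> Op d n) :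
  compiled_tr ks (\sum_i F i) = \sum_i compiled_tr ks (F i).
Proof.
by rewrite /compiled_tr (linear_map_sum (linear_map_compiled_seq ks)) raddf_sum.
Qed.

Lemma compiled_trZ ks c X : compiled_tr ks (c *: X) = c * compiled_tr ks X.
Proof. by rewrite /compiled_tr (linear_mapZ (linear_map_compiled_seq ks)) mxtraceZ. Qed.

Lemma hatM_conj_Xop_Zop k y a W :
  hatM M k (conjop (Xop y) (conjop (Zop a) W)) = hatM M k (conjop (Xop y) W).
Proof.
rewrite /hatM; congr (_ *: _); apply: eq_bigr => a' _.
rewrite [RHS](reindex_inj (addIr a)); apply: eq_bigr => b _; apply: eq_bigr => x _.
by rewrite !conjop_XopD conjop_Zop_Xop_Zop.
Qed.

Lemma compiled_tr_conj_Xop_Zop ks y a W :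
  compiled_tr ks (conjop (Xop y) (conjop (Zop a) W)) =
  compiled_tr ks (conjop (Xop y) W).
Proof.
case: ks => [|k ks]; last by rewrite /compiled_tr /compiled_seq /= hatM_conj_Xop_Zop.
by rewrite /compiled_tr /= !mxtrace_conjop ?Xop_unitary ?Zop_unitary.
Qed.

Lemma compiled_tr_hatM_Xop ks k x s :
  compiled_tr ks (hatM M k (conjop (Xop x) s)) =
  ((d ^ (2 * n))%:R)^-1 * \sum_b \sum_y
    compiled_tr ks (conjop (Xop y) (M (k - y) (conjop (Zop b *m Xop (x - y)) s))).
Proof.
have scaleE : ((d ^ (3 * n))%:R)^-1 * (d ^ n)%:R = ((d ^ (2 * n))%:R)^-1 :> algC.
  rewrite mulSn expnD natrM invfM mulrAC mulVf ?mul1r //.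
  by rewrite pnatr_eq0 -lt0n expn_gt0 d_gt0.
rewrite -scaleE -mulrA mulr_natl -(@card_Zdn d n d_gt0) -sumr_const.
rewrite /hatM compiled_trZ compiled_tr_sum.
congr (_ * _); apply: eq_bigr => a _; rewrite compiled_tr_sum; apply: eq_bigr => b _.
rewrite compiled_tr_sum; apply: eq_bigr => y _.
by rewrite compiled_tr_conj_Xop_Zop conjop_XopD conjopM (addrC (- y)).
Qed.

(* routine_prob without normalising the post-measurement states. *)
Fixpoint routine_weight s x ks : algC :=
  match ks with
  | [::] => \tr s
  | k :: ks' =>
    \sum_a \sum_b ((d ^ (2 * n))%:R)^-1 *
      \sum_(o | a + o == k) routine_weight (M o (conjop (Zop b *m Xop (x - a)) s)) a ks'
  end.

Lemma routine_weightZ ks c s x :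
  routine_weight (c *: s) x ks = c * routine_weight s x ks.
Proof.
elim: ks c s x => [|k ks IH] c s x /=; first by rewrite mxtraceZ.
rewrite mulr_sumr; apply: eq_bigr => a _; rewrite mulr_sumr; apply: eq_bigr => b _.
rewrite mulrCA; congr (_ * _); rewrite mulr_sumr; apply: eq_bigr => o _.
by rewrite conjopZ (linear_mapZ (instrument_linear o)) IH.
Qed.

Lemma routine_prob_weight ks s x : psd s ->
  \tr s * routine_prob M ((\tr s)^-1 *: s) x ks = routine_weight s x ks.
Proof.
elim: ks s x => [|k ks IH] s x psd_s; first by rewrite /= mulr1.
have normalise t : psd t -> routine_prob M t x (k :: ks) = routine_weight t x (k :: ks).
  move=> psd_t /=; apply: eq_bigr => a _; apply: eq_bigr => b _.
  congr (_ * _); apply: eq_bigr => o _.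
  exact/IH/instrument_psd/psd_conjop.
have [tr0|tr_neq0] := eqVneq (\tr s) 0.
  rewrite tr0 mul0r (psd_tr0 psd_s tr0).
  by have := routine_weightZ (k :: ks) 0 0 x; rewrite scale0r mul0r.
rewrite normalise ?routine_weightZ ?mulrA ?divff ?mul1r //.
by apply: psd_scale => //; rewrite invr_ge0 psd_tr_ge0.
Qed.

Lemma routine_weight_compiled ks s x :
  routine_weight s x ks = compiled_tr ks (conjop (Xop x) s).
Proof.
elim: ks s x => [|k ks IH] s x /=.
  by rewrite /compiled_tr mxtrace_conjop ?Xop_unitary.
rewrite -[RHS]/(compiled_tr ks (hatM M k (conjop (Xop x) s))) compiled_tr_hatM_Xop.
rewrite exchange_big mulr_sumr; apply: eq_bigr => a _; rewrite mulr_sumr.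
by apply: eq_bigr => b _; rewrite sum_pred_addl IH.
Qed.

End RandomCompiling.

Theorem lemma1 (d n : nat) (hd : (0 < d)%N) (hn : (0 < n)%N)
  (M : Zdn d n -> Op d n -> Op d n) (hM : instrument M)
  (rho : Op d n) (hrho : density rho)
  (m : nat) (hm : (0 < m)%N) (k : m.-tuple (Zdn d n)) :
  routine_prob M rho 0 k = \tr (foldl (fun sigma kk => hatM M kk sigma) rho k).
Proof.
case: hrho => psd_rho tr_rho.
have := routine_prob_weight hM k 0 psd_rho; rewrite tr_rho invr1 scale1r mul1r => ->.
by rewrite (routine_weight_compiled hd hM) Xop0 conjop1.
Qed.
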